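(* Let $G_H$ be a finite undirected multigraph (parallel edges allowed, no self-loops) with vertex set $V$ and edge set partitioned as $E = S \sqcup S^c$ into secure edges $S$ and insecure edges $S^c$, and let $0 < p_J^{S^c} \le p_J^{S} \le p_I$ be real costs satisfying $p_J^{S^c} < p_I/2$ and $p_J^{S} + p_J^{S^c} < p_I$. Give weight $p_J^{S}$ to secure edges and $p_J^{S^c}$ to insecure edges, and let $C^*$ be a cut of minimum weight among cuts containing at least one insecure edge. Then the attack $(C^*, J, I)$ with $I = \{e\}$ for some insecure edge $e \in C^*$ and $J = C^*\setminus \{e\}$ (all other secure and insecure edges of $C^*$ jammed) is an optimal detectable generalized attack in $G_H$.
   Context: For a nonempty proper subset $U \subsetneq V$, the cut $\delta(U)$ is the set of edges with exactly one endpoint in $U$; a cut of $G_H$ is any set of this form. The costs are: $p_J^{S^c}$ per jammed insecure edge, $p_J^S$ per jammed secure edge, $p_I$ per insecure edge with injected data. A generalized attack is a triple $(C,J,I)$ where $C$ is a cut, $J \subseteq C$ is the set of jammed edges, and $I \subseteq (C \cap S^c)\setminus J$ is a nonempty set of injected edges; its cost is $p_J^{S}|J\cap S| + p_J^{S^c}|J \cap S^c| + p_I |I|$. The attack is detectable if $2|I| > |C \setminus J|$ (the injected edges form a strict majority of the non-jammed edges of the cut). An optimal detectable generalized attack is one of minimum cost among all detectable generalized attacks. *)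

From mathcomp Require Import all_boot all_order all_algebra.
Set Implicit Arguments. Unset Strict Implicit. Unset Printing Implicit Defensive.
Import Order.TTheory GRing.Theory Num.Theory.
Local Open Scope ring_scope.

(* A finite undirected multigraph: finite vertex type V, finite edge type E,
   and an endpoint map [ends : E -> V * V] (the order of the pair is
   irrelevant for all notions below). Parallel edges are distinct elements
   of E with the same endpoints. *)

Section Defs.
Variables (V E : finType) (ends : E -> V * V).

Definition loopless : Prop := forall e : E, (ends e).1 != (ends e).2.

Definition cut_of (U : {set V}) : {set E} :=
  [set e | ((ends e).1 \in U) != ((ends e).2 \in U)].

Definition is_cut (C : {set E}) : Prop :=
  exists U : {set V}, [/\ U != set0, U != setT & C = cut_of U].

Variable S : {set E}.

Definition gen_attack (C J I : {set E}) : Prop :=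
  [/\ is_cut C, J \subset C, I \subset (C :&: ~: S) :\: J & I != set0].

Variable R : realFieldType.
Variables (pJS pJSc pI : R).

Definition attack_cost (J I : {set E}) : R :=
  pJS * #|J :&: S|%:R + pJSc * #|J :&: ~: S|%:R + pI * #|I|%:R.

Definition detectable (C J I : {set E}) : bool :=
  (#|C :\: J| < 2 * #|I|)%N.

Definition optimal_detectable_attack (C J I : {set E}) : Prop :=
  [/\ gen_attack C J I, detectable C J I &
      forall C' J' I', gen_attack C' J' I' -> detectable C' J' I' ->
        attack_cost J I <= attack_cost J' I'].

Definition cut_weight (C : {set E}) : R :=
  pJS * #|C :&: S|%:R + pJSc * #|C :&: ~: S|%:R.

Definition min_insecure_cut (C : {set E}) : Prop :=
  [/\ is_cut C, C :&: ~: S != set0 &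
      forall C', is_cut C' -> C' :&: ~: S != set0 -> cut_weight C <= cut_weight C'].

End Defs.

(* Any detectable attack (C, J, I) injects on k >= 1 insecure edges of C and leaves
   fewer than 2k edges of C unjammed, at least k of them insecure.  Weighing the
   unjammed edges against the cut weight shows that its cost is at least
   w(C) - pJSc + pI, where w is the cut weight.  Since C contains an insecure edge,
   w(C) >= w(Cstar), and jamming all of Cstar except one insecure edge e, injecting on e,
   costs exactly w(Cstar) - pJSc + pI. *)

From mathcomp Require Import all_boot all_order all_algebra.
From mathcomp Require Import lra zify.
Set Implicit Arguments. Unset Strict Implicit. Unset Printing Implicit Defensive.
Import Order.TTheory GRing.Theory Num.Theory.
Local Open Scope ring_scope.

Lemma cardsI_subD (T : finType) (C J A : {set T}) : J \subset C ->
  #|C :&: A| = (#|J :&: A| + #|(C :\: J) :&: A|)%N.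
Proof.
move=> sJC; rewrite -(cardsID J (C :&: A)).
congr (_ + _)%N; apply: eq_card => x; rewrite !inE.
  by case: (boolP (x \in J)) => [/(subsetP sJC)->|]; rewrite ?andbF ?andbT.
by case: (x \in J); case: (x \in C); case: (x \in A).
Qed.

Lemma unjammed_cost_bound (R : realFieldType) (a b p : R) (c d k : nat) :
  0 <= b -> b <= a -> a + b <= p ->
  (k <= d)%N -> (c + d < 2 * k)%N ->
  a * c%:R + b * d%:R - b + p <= p * k%:R.
Proof.
move=> b0 ba abp kd cdk.
have cd_le : c%:R + d%:R + 1 <= 2 * k%:R :> R.
  have : (c + d + 1 <= 2 * k)%N by lia.
  by rewrite -(ler_nat R) natrM !natrD.
have d_ge : k%:R <= d%:R :> R by rewrite ler_nat.
have k_ge : 1 <= k%:R :> R by rewrite ler1n; lia.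
have e1 : a * c%:R <= a * (2 * k%:R - 1 - d%:R) by apply: ler_wpM2l; lra.
have e2 : (a - b) * k%:R <= (a - b) * d%:R by apply: ler_wpM2l; lra.
have e3 : (a + b) * (k%:R - 1) <= p * (k%:R - 1) by apply: ler_wpM2r; lra.
lra.
Qed.

Section DetectableAttacks.
Variables (V E : finType) (ends : E -> V * V) (S : {set E}).
Variables (R : realFieldType) (pJS pJSc pI : R).

Local Notation w := (cut_weight S pJS pJSc).
Local Notation cost := (attack_cost S pJS pJSc pI).

Lemma cut_weightID (C J : {set E}) : J \subset C -> w C = w J + w (C :\: J).
Proof.
move=> sJC; rewrite /cut_weight !(cardsI_subD _ sJC) !natrD.
by rewrite !mulrDr addrACA.
Qed.

Lemma attack_costE (J I : {set E}) : cost J I = w J + pI * #|I|%:R.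
Proof. by []. Qed.

Lemma gen_attack_insecure_cut (C J I : {set E}) :
  gen_attack ends S C J I -> C :&: ~: S != set0.
Proof.
case=> _ _ sI /set0Pn[x xI]; apply/set0Pn; exists x.
by move: (subsetP sI x xI); rewrite !inE => /and3P[_ -> ->].
Qed.

Hypotheses (pJSc_ge0 : 0 <= pJSc) (pJSc_le_pJS : pJSc <= pJS)
  (pJS_pJSc_le_pI : pJS + pJSc <= pI).

Lemma detectable_attack_cost_ge (C J I : {set E}) :
  gen_attack ends S C J I -> detectable C J I ->
  w C - pJSc + pI <= cost J I.
Proof.
move=> [_ sJC sI _] det; rewrite attack_costE (cut_weightID sJC).
set U := C :\: J.
have sizeU : #|U| = (#|U :&: S| + #|U :&: ~: S|)%N.
  by rewrite -(cardsID S U) setDE.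
have I_le : (#|I| <= #|U :&: ~: S|)%N.
  apply: subset_leq_card; apply: (subset_trans sI).
  by apply/subsetP => x; rewrite !inE => /and3P[-> -> ->].
have := unjammed_cost_bound (c := #|U :&: S|) pJSc_ge0 pJSc_le_pJS pJS_pJSc_le_pI I_le.
rewrite -sizeU => /(_ det); rewrite /cut_weight; lra.
Qed.

Lemma setD_setD1 (C : {set E}) (e : E) : e \in C -> C :\: (C :\ e) = [set e].
Proof. by move=> eC; rewrite setDDr setDv set0U; apply/setIidPr; rewrite sub1set. Qed.

Lemma single_injection_costE (C : {set E}) (e : E) :
  e \in C :&: ~: S -> cost (C :\ e) [set e] = w C - pJSc + pI.
Proof.
rewrite !inE => /andP[eC eNS].
have sub : C :\ e \subset C := subsetDl C [set e].
rewrite attack_costE (cut_weightID sub) setD_setD1 // cards1 /cut_weight.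
have -> : [set e] :&: S = set0.
  by apply/setP => x; rewrite !inE; case: eqP => // ->; apply/negbTE.
have -> : [set e] :&: ~: S = [set e] by apply/setIidPl; rewrite sub1set inE.
rewrite cards0 cards1; lra.
Qed.

Lemma single_injection_detectable_attack (C : {set E}) (e : E) :
  is_cut ends C -> e \in C :&: ~: S ->
  gen_attack ends S C (C :\ e) [set e] /\ detectable C (C :\ e) [set e].
Proof.
move=> cutC eCNS; have /setIP[eC _] := eCNS.
split; last by rewrite /detectable setD_setD1 // cards1.
split=> //; first exact: subsetDl.
  by rewrite sub1set inE eCNS !inE eqxx.
by apply/set0Pn; exists e; rewrite inE.
Qed.

End DetectableAttacks.

Theorem theorem7 (V E : finType) (ends : E -> V * V) (S : {set E})
    (R : realFieldType) (pJS pJSc pI : R) (Cstar : {set E}) (e : E) :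
  loopless ends ->
  0 < pJSc -> pJSc <= pJS -> pJS <= pI ->
  pJSc < pI / 2%:R -> pJS + pJSc < pI ->
  min_insecure_cut ends S pJS pJSc Cstar ->
  e \in Cstar :&: ~: S ->
  optimal_detectable_attack ends S pJS pJSc pI Cstar (Cstar :\ e) [set e].
Proof.
move=> _ pJSc_gt0 pJSc_le_pJS _ _ cost_lt [cutC _ minC] eCNS.
have [attack det] := single_injection_detectable_attack cutC eCNS.
split=> // C J I attack' det'.
have w_le : cut_weight S pJS pJSc Cstar <= cut_weight S pJS pJSc C.
  by case: (attack') => cutC' _ _ _; apply: minC (gen_attack_insecure_cut attack').
have := detectable_attack_cost_ge (ltW pJSc_gt0) pJSc_le_pJS (ltW cost_lt) attack' det'.
rewrite single_injection_costE //; lra.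
Qed.
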